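(* Let $\mathbb{D}^2=\{z\in\mathbb{C}:|z|\leq 1\}$ be the closed unit disc, with boundary circle $S^1=\{z:|z|=1\}$. Let $f:\mathbb{D}^2\rightarrow\mathbb{D}^2$ be continuous such that $|f(z)-z|<\frac{\sqrt{3}}{2}$ for all $z\in S^1$. Then there exists a continuous map $g:\mathbb{D}^2\rightarrow\mathbb{D}^2$ such that $\|g\circ f-\mathrm{id}_{\mathbb{D}^2}\|_{\infty}=\sup_{z\in\mathbb{D}^2}|g(f(z))-z|<1$. *)

From Stdlib Require Import Reals.
From Coquelicot Require Export Coquelicot.
Open Scope R_scope.

Definition in_disc (z : C) : Prop := Cmod z <= 1.

Definition circle (z : C) : Prop := Cmod z = 1.

Definition continuous_on_disc (f : C -> C) : Prop :=
  forall z, in_disc z -> forall eps : R, 0 < eps ->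
    exists delta : R, 0 < delta /\
      forall w, in_disc w -> Cmod (Cminus w z) < delta ->
        Cmod (Cminus (f w) (f z)) < eps.

Definition maps_disc (f : C -> C) : Prop := forall z, in_disc z -> in_disc (f z).

(* A small multiple g(z) = t z of the identity works.  Deep inside the disc,
   |t f(z) - z| <= t + |z| stays below 1 once |z| <= 1 - 2t.  Near the circle,
   write z = r u with |u| = 1; by uniform continuity f(z) is close to f(u),
   which lies within m < 1 of u, so t f(z) - z is roughly t (f(u) - u) - (r - t) u,
   of modulus at most t m + r - t <= 1 - t (1 - m). *)
From Stdlib Require Import Reals Lra IndefiniteDescription.
From Coquelicot Require Import Coquelicot.
Open Scope R_scope.

Lemma Cmod_pair_le (a b : R) : Cmod (a, b) <= Rabs a + Rabs b.
Proof.
  replace (a, b) with (RtoC a + RtoC b * Ci)%C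
    by (unfold RtoC, Ci, Cplus, Cmult; simpl; f_equal; ring).
  eapply Rle_trans; [apply Cmod_triangle|].
  rewrite Cmod_mult, Cmod_Ci, !Cmod_R; lra.
Qed.

Lemma Cmod_sub_triangle (a b c : C) :
  Cmod (a - c) <= Cmod (a - b) + Cmod (b - c).
Proof.
  replace (a - c)%C with ((a - b) + (b - c))%C by ring.
  apply Cmod_triangle.
Qed.

Lemma Cmod_sub_sym (a b : C) : Cmod (a - b) = Cmod (b - a).
Proof. now rewrite <- Cmod_opp, Copp_minus_distr. Qed.

Lemma Cmod_scal_nonneg (t : R) (z : C) : 0 <= t -> Cmod (t * z) = t * Cmod z.
Proof. intros Ht; now rewrite Cmod_mult, Cmod_R, Rabs_pos_eq. Qed.

(* Outside the disc the required implication holds vacuously with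
   d = |q| - 1, since then no point of the disc is d-close to q. *)
Lemma continuous_on_disc_local_modulus (f : C -> C) (eps : R) :
  continuous_on_disc f -> 0 < eps -> forall q : C,
  exists d, 0 < d /\ forall z w, in_disc z -> in_disc w ->
    Cmod (z - q) < d -> Cmod (w - q) < d -> Cmod (f w - f z) < eps.
Proof.
  intros Hf Heps q.
  destruct (Rle_dec (Cmod q) 1) as [Hq | Hq].
  - destruct (Hf q Hq (eps / 2)) as [d [Hd Hdq]]; [lra|].
    exists d; split; [exact Hd|]; intros z w Hz Hw Hzq Hwq.
    pose proof (Hdq z Hz Hzq); pose proof (Hdq w Hw Hwq).
    eapply Rle_lt_trans; [apply (Cmod_sub_triangle _ (f q))|].
    rewrite (Cmod_sub_sym (f q)); lra.
  - exists (Cmod q - 1); split; [lra|]; intros z w Hz _ Hzq _.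
    exfalso; unfold in_disc in Hz.
    pose proof (Cmod_sub_triangle q z 0) as Htri.
    rewrite (Cmod_sub_sym q z) in Htri.
    replace (q - 0)%C with q in Htri by ring.
    replace (z - 0)%C with z in Htri by ring.
    lra.
Qed.

Lemma in_disc_coords (z : C) :
  in_disc z -> -1 <= fst z <= 1 /\ -1 <= snd z <= 1.
Proof.
  unfold in_disc; intros Hz; pose proof (Rmax_Cmod z) as Hmax.
  split; apply Rabs_le_between.
  - apply Rle_trans with (1 := Rmax_l _ (Rabs (snd z))); lra.
  - apply Rle_trans with (1 := Rmax_r (Rabs (fst z)) _); lra.
Qed.

Lemma continuous_on_disc_uniform (f : C -> C) (eps : R) :
  continuous_on_disc f -> 0 < eps ->
  exists d, 0 < d /\ forall z w, in_disc z -> in_disc w ->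
    Cmod (w - z) < d -> Cmod (f w - f z) < eps.
Proof.
  intros Hf Heps.
  assert (Hmod : forall q : C, {d : posreal | forall z w, in_disc z -> in_disc w ->
    Cmod (z - q) < d -> Cmod (w - q) < d -> Cmod (f w - f z) < eps}).
  { intros q; apply constructive_indefinite_description.
    destruct (continuous_on_disc_local_modulus f eps Hf Heps q) as [d [Hd Hdq]].
    now exists (mkposreal d Hd). }
  pose (delta u v := proj1_sig (Hmod (u, v))).
  pose (quarter u v := mkposreal (delta u v / 4) ltac:(pose proof (cond_pos (delta u v)); lra)).
  destruct (compactness_value_2d (-1) 1 (-1) 1 quarter) as [d Hd].
  exists d; split; [apply cond_pos|]; intros [x y] w Hz Hw Hwz.
  destruct (in_disc_coords _ Hz) as [Hx Hy].
  apply Rnot_le_lt; intros Hfar; apply (Hd x y Hx Hy).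
  intros (u & v & _ & _ & Hxu & Hyv & Hdq); simpl in Hxu, Hyv, Hdq.
  pose proof (cond_pos d).
  assert (Hzq : Cmod ((x, y) - (u, v)) < delta u v / 2).
  { change ((x, y) - (u, v))%C with (x - u, y - v).
    eapply Rle_lt_trans; [apply Cmod_pair_le | lra]. }
  assert (Hzq' : Cmod ((x, y) - (u, v)) < delta u v) by lra.
  assert (Hwq : Cmod (w - (u, v)) < delta u v).
  { eapply Rle_lt_trans; [apply (Cmod_sub_triangle _ (x, y))|]; lra. }
  pose proof (proj2_sig (Hmod (u, v)) (x, y) w Hz Hw Hzq' Hwq).
  lra.
Qed.

Lemma continuous_on_disc_scal (t : R) : continuous_on_disc (fun z => t * z)%C.
Proof.
  intros z _ eps Heps.
  assert (Hpos : 0 < Rabs t + 1) by (pose proof (Rabs_pos t); lra).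
  exists (eps / (Rabs t + 1)); split; [apply Rdiv_lt_0_compat; lra|].
  intros w _ Hwz.
  replace (t * w - t * z)%C with (t * (w - z))%C by ring.
  rewrite Cmod_mult, Cmod_R.
  apply Rle_lt_trans with (Rabs t * (eps / (Rabs t + 1))).
  - apply Rmult_le_compat_l; [apply Rabs_pos | lra].
  - apply (Rmult_lt_reg_r (Rabs t + 1)); [lra|].
    field_simplify; lra.
Qed.

Lemma maps_disc_scal (t : R) : Rabs t <= 1 -> maps_disc (fun z => t * z)%C.
Proof.
  unfold maps_disc, in_disc; intros Ht z Hz.
  rewrite Cmod_mult, Cmod_R.
  pose proof (Cmod_ge_0 z); pose proof (Rabs_pos t); nra.
Qed.

Lemma Cmod_scal_sub_radial (t r : R) (w v u : C) :
  Cmod u = 1 -> 0 <= t <= r ->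
  Cmod (t * w - r * u) <= t * Cmod (w - v) + t * Cmod (v - u) + (r - t).
Proof.
  intros Hu Htr.
  replace (t * w - r * u)%C with (t * (w - v) + t * (v - u) + - (RtoC (r - t) * u))%C
    by (rewrite RtoC_minus; ring).
  eapply Rle_trans; [apply Cmod_triangle|].
  eapply Rle_trans; [apply Rplus_le_compat_r, Cmod_triangle|].
  rewrite Cmod_opp, !Cmod_scal_nonneg, Hu by lra.
  lra.
Qed.

Lemma circle_normalize (z : C) : 0 < Cmod z -> circle (RtoC (/ Cmod z) * z)%C.
Proof.
  intros Hz; unfold circle.
  rewrite Cmod_scal_nonneg by (apply Rlt_le, Rinv_0_lt_compat, Hz).
  field; lra.
Qed.

Lemma normalize_scal (z : C) : 0 < Cmod z -> z = (Cmod z * (RtoC (/ Cmod z) * z))%C.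
Proof.
  intros Hz.
  rewrite Cmult_assoc, <- RtoC_mult, Rinv_r, Cmult_1_l by lra.
  reflexivity.
Qed.

Section ScaledLeftInverse.

Variables (f : C -> C) (m : R).
Hypothesis m_lt_1 : m < 1.
Hypothesis f_cont : continuous_on_disc f.
Hypothesis f_maps : maps_disc f.
Hypothesis f_near_id : forall z, circle z -> Cmod (f z - z) <= m.

Lemma near_id_bound_nonneg : 0 <= m.
Proof.
  eapply Rle_trans; [apply Cmod_ge_0 | apply f_near_id, Cmod_1].
Qed.

Lemma scaled_left_inverse_bound :
  exists t, 0 < t <= 1 /\
    forall z, in_disc z -> Cmod (t * f z - z) <= 1 - t * (1 - m) / 2.
Proof.
  pose proof near_id_bound_nonneg as Hm0.
  destruct (continuous_on_disc_uniform f ((1 - m) / 2) f_cont) as [d [Hd Hfd]]; [lra|].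
  set (t := Rmin d (1 / 2) / 2).
  assert (Ht : 0 < t /\ 2 * t <= d /\ t <= 1 / 4).
  { unfold t; pose proof (Rmin_l d (1 / 2)); pose proof (Rmin_r d (1 / 2)).
    pose proof (Rmin_glb_lt d (1 / 2) 0 Hd ltac:(lra)); lra. }
  exists t; split; [lra|]; intros z Hz.
  pose proof (f_maps z Hz) as Hfz; unfold in_disc in Hz, Hfz.
  set (r := Cmod z) in Hz.
  destruct (Rle_dec r (1 - 2 * t)) as [Hinner | Houter].
  - unfold Cminus; eapply Rle_trans; [apply Cmod_triangle|].
    rewrite Cmod_opp, Cmod_scal_nonneg by lra.
    fold r; pose proof (Cmod_ge_0 (f z)); nra.
  - assert (Hr : 0 < r) by lra.
    set (u := (RtoC (/ r) * z)%C).
    assert (Hu : circle u) by exact (circle_normalize z Hr).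
    assert (Hz_eq : z = (r * u)%C) by exact (normalize_scal z Hr).
    assert (Hzu : Cmod (z - u) < d).
    { rewrite Hz_eq; replace (r * u - u)%C with (RtoC (r - 1) * u)%C
        by (rewrite RtoC_minus; ring).
      rewrite Cmod_mult, Cmod_R, Hu, Rabs_left1; lra. }
    assert (Hu_disc : in_disc u) by (unfold in_disc; rewrite Hu; lra).
    pose proof (Hfd u z Hu_disc Hz Hzu).
    replace (t * f z - z)%C with (t * f z - r * u)%C by now rewrite <- Hz_eq.
    eapply Rle_trans; [apply (Cmod_scal_sub_radial t r (f z) (f u) u Hu); lra|].
    pose proof (f_near_id u Hu); nra.
Qed.

End ScaledLeftInverse.

Lemma sqrt3_half_lt_1 : sqrt 3 / 2 < 1.
Proof.
  assert (H : sqrt 3 < sqrt (2 * 2)) by (apply sqrt_lt_1_alt; lra).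
  rewrite sqrt_square in H; lra.
Qed.

Theorem lemma1 (f : C -> C) :
  continuous_on_disc f -> maps_disc f ->
  (forall z, circle z -> Cmod (Cminus (f z) z) < sqrt 3 / 2) ->
  exists g : C -> C, continuous_on_disc g /\ maps_disc g /\
    exists c : R, c < 1 /\
      forall z, in_disc z -> Cmod (Cminus (g (f z)) z) <= c.
Proof.
  intros Hcont Hmaps Hnear.
  destruct (scaled_left_inverse_bound f (sqrt 3 / 2) sqrt3_half_lt_1 Hcont Hmaps
              (fun z Hz => Rlt_le _ _ (Hnear z Hz))) as [t [Ht Hbound]].
  exists (fun z => t * z)%C; split; [apply continuous_on_disc_scal|].
  split; [apply maps_disc_scal; rewrite Rabs_pos_eq; lra|].
  exists (1 - t * (1 - sqrt 3 / 2) / 2); split; [|exact Hbound].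
  pose proof sqrt3_half_lt_1; nra.
Qed.
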